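(* Let $f^+,f^-:[0,1]\to[0,1]$ with $f^+(0)=0$ and let $\alpha>0$. If $ALG(uvw)\le\alpha\,LP(uvw)$ for every $(+,-,-)$-triangle whose edge lengths lie in $[0,1]$ and satisfy the triangle inequalities, then $f^-(x)\ge\sqrt{1-\alpha(1-x)}$ for every $x\in[0,1]$ with $1-\alpha(1-x)\ge 0$.
   Context: A triangle $uvw$ has pairs $uv,vw,uw$, each a positive ($+$) or negative ($-$) edge with a length $x_e\in[0,1]$; triangle inequalities: each length is at most the sum of the other two. Let $p_e=f^+(x_e)$ for positive and $p_e=f^-(x_e)$ for negative edges. For a pair $(u,v)$ with third vertex $w$: $e.cost_w(u,v)=p_{uw}(1-p_{vw})+(1-p_{uw})p_{vw}$ if $(u,v)$ is positive, $(1-p_{uw})(1-p_{vw})$ if negative; $e.lp_w(u,v)=(1-p_{uw}p_{vw})x_{uv}$ if positive, $(1-p_{uw}p_{vw})(1-x_{uv})$ if negative. $ALG(uvw)=e.cost_w(u,v)+e.cost_v(w,u)+e.cost_u(v,w)$, $LP(uvw)=e.lp_w(u,v)+e.lp_v(w,u)+e.lp_u(v,w)$. A $(+,-,-)$-triangle has one positive and two negative edges. *)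

From Stdlib Require Import Reals.
Open Scope R_scope.

(* A triangle uvw with edges e1 = uv, e2 = vw, e3 = uw.
   Sign true = positive edge, false = negative edge; x_i = edge lengths. *)

Definition pval (fp fm : R -> R) (s : bool) (x : R) : R :=
  if s then fp x else fm x.

(* e.cost for a pair with sign s whose two other edges have values p1, p2 *)
Definition ecost (s : bool) (p1 p2 : R) : R :=
  if s then p1 * (1 - p2) + (1 - p1) * p2 else (1 - p1) * (1 - p2).

(* e.lp for a pair with sign s and length x whose two other edges have values p1, p2 *)
Definition elp (s : bool) (p1 p2 x : R) : R :=
  if s then (1 - p1 * p2) * x else (1 - p1 * p2) * (1 - x).

(* ALG(uvw) = e.cost_w(u,v) + e.cost_v(w,u) + e.cost_u(v,w) *)
Definition ALG (fp fm : R -> R) (s1 s2 s3 : bool) (x1 x2 x3 : R) : R :=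
  let p1 := pval fp fm s1 x1 in
  let p2 := pval fp fm s2 x2 in
  let p3 := pval fp fm s3 x3 in
  ecost s1 p3 p2 + ecost s3 p2 p1 + ecost s2 p1 p3.

(* LP(uvw) = e.lp_w(u,v) + e.lp_v(w,u) + e.lp_u(v,w) *)
Definition LP (fp fm : R -> R) (s1 s2 s3 : bool) (x1 x2 x3 : R) : R :=
  let p1 := pval fp fm s1 x1 in
  let p2 := pval fp fm s2 x2 in
  let p3 := pval fp fm s3 x3 in
  elp s1 p3 p2 x1 + elp s3 p2 p1 x3 + elp s2 p1 p3 x2.

Definition pmm_signs (s1 s2 s3 : bool) : Prop :=
  (s1 = true /\ s2 = false /\ s3 = false) \/
  (s1 = false /\ s2 = true /\ s3 = false) \/
  (s1 = false /\ s2 = false /\ s3 = true).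

Definition valid_lengths (x1 x2 x3 : R) : Prop :=
  0 <= x1 <= 1 /\ 0 <= x2 <= 1 /\ 0 <= x3 <= 1 /\
  x1 <= x2 + x3 /\ x2 <= x1 + x3 /\ x3 <= x1 + x2.

(* The degenerate (+,-,-)-triangle with lengths (0, x, x) has p = (0, q, q) with
   q = f^-(x); there ALG = 2(1 - q^2) and LP = 2(1 - x), so the hypothesis
   gives q^2 >= 1 - alpha(1 - x). *)

From Stdlib Require Import Reals Lra.
Open Scope R_scope.

Lemma ALG_pmm_degenerate (fp fm : R -> R) (x : R) :
  fp 0 = 0 -> ALG fp fm true false false 0 x x = 2 * (1 - fm x ^ 2).
Proof. intros hfp0; unfold ALG, pval, ecost; simpl; rewrite hfp0; ring. Qed.

Lemma LP_pmm_degenerate (fp fm : R -> R) (x : R) :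
  fp 0 = 0 -> LP fp fm true false false 0 x x = 2 * (1 - x).
Proof. intros hfp0; unfold LP, pval, elp; simpl; rewrite hfp0; ring. Qed.

Lemma sqrt_le_of_le_sqr (a q : R) : 0 <= q -> a <= q ^ 2 -> sqrt a <= q.
Proof.
  intros hq ha.
  rewrite <- (sqrt_pow2 q hq).
  apply sqrt_le_1_alt; exact ha.
Qed.

Theorem corollary1 (fp fm : R -> R) (alpha : R)
  (hfp : forall x, 0 <= x <= 1 -> 0 <= fp x <= 1)
  (hfm : forall x, 0 <= x <= 1 -> 0 <= fm x <= 1)
  (hfp0 : fp 0 = 0)
  (halpha : 0 < alpha)
  (H : forall (s1 s2 s3 : bool) (x1 x2 x3 : R),
      pmm_signs s1 s2 s3 -> valid_lengths x1 x2 x3 ->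
      ALG fp fm s1 s2 s3 x1 x2 x3 <= alpha * LP fp fm s1 s2 s3 x1 x2 x3) :
  forall x, 0 <= x <= 1 -> 0 <= 1 - alpha * (1 - x) ->
    sqrt (1 - alpha * (1 - x)) <= fm x.
Proof.
  intros x hx _.
  assert (hsigns : pmm_signs true false false) by (unfold pmm_signs; tauto).
  assert (hlengths : valid_lengths 0 x x) by (unfold valid_lengths; lra).
  pose proof (H _ _ _ _ _ _ hsigns hlengths) as hratio.
  rewrite (ALG_pmm_degenerate fp fm x hfp0), (LP_pmm_degenerate fp fm x hfp0)
    in hratio.
  apply sqrt_le_of_le_sqr; [apply hfm, hx | lra].
Qed.
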